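(* For $\sigma>0$ let $\mathcal H_\sigma$ denote the RKHS of the Gaussian kernel $k_\sigma(x,y) = \exp(-\|x-y\|^2/(2\sigma^2))$ on $\mathbb R^d$, with norm $\|\cdot\|_\sigma$. Let $x_1,\dots,x_n\in\mathbb R^d$, $a,b\in\mathbb R^n$, $f = \sum_{i=1}^n a_i k_\sigma(x_i,\cdot)$ and $g = \sum_{i=1}^n b_i k_\sigma(x_i,\cdot)$. Let $K$ be the $n\times n$ matrix with $K_{ij} = k_{\sqrt2\sigma}(x_i,x_j)$, and let $D_a = \operatorname{diag}(a)$, $D_b = \operatorname{diag}(b)$. Then $$\|fg\|_{\sigma/\sqrt2}^2 = \operatorname{tr}\big((D_aK)^2(D_bK)^2\big).$$ *)

From HB Require Import structures.
From mathcomp Require Import all_boot all_order all_algebra.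
From mathcomp Require Import reals.
From mathcomp.analysis Require Import sequences exp.
Set Implicit Arguments. Unset Strict Implicit. Unset Printing Implicit Defensive.
Import Order.TTheory GRing.Theory Num.Theory.
Local Open Scope ring_scope.

Definition sqdist (R : realType) (d : nat) (x y : 'rV[R]_d) : R :=
  \sum_(k < d) (x ord0 k - y ord0 k) ^+ 2.

Definition gauss (R : realType) (d : nat) (s : R) (x y : 'rV[R]_d) : R :=
  expR (- sqdist x y / (2 * s ^+ 2)).

Record is_RKHS (R : realType) (X : Type) (k : X -> X -> R)
    (H : (X -> R) -> Prop) (ip : (X -> R) -> (X -> R) -> R) : Prop := {
  rkhs_zero : H (fun _ => 0);
  rkhs_add : forall f g, H f -> H g -> H (fun x => f x + g x);
  rkhs_scale : forall (c : R) f, H f -> H (fun x => c * f x);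
  rkhs_sym : forall f g, H f -> H g -> ip f g = ip g f;
  rkhs_lin : forall (c : R) f g h, H f -> H g -> H h ->
      ip (fun x => c * f x + g x) h = c * ip f h + ip g h;
  rkhs_pos : forall f, H f -> 0 <= ip f f;
  rkhs_def : forall f, H f -> ip f f = 0 -> f = (fun _ => 0);
  rkhs_complete : forall u : nat -> X -> R, (forall m, H (u m)) ->
      (forall e : R, 0 < e -> exists N, forall m p, (N <= m)%N -> (N <= p)%N ->
          ip (fun x => u m x - u p x) (fun x => u m x - u p x) < e) ->
      exists2 h, H h & forall e : R, 0 < e -> exists N, forall m, (N <= m)%N ->
          ip (fun x => u m x - h x) (fun x => u m x - h x) < e;
  rkhs_section : forall x, H (k x);
  rkhs_reproducing : forall f x, H f -> ip f (k x) = f x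
}.

(* The product of two Gaussians of width sigma centred at u and v is the
   Gaussian of width sigma/sqrt 2 centred at the midpoint of u and v, scaled by
   k_{sqrt 2 sigma}(u, v).  Hence fg is the finite kernel expansion
   sum_(i,j) a_i b_j K_ij k_{sigma/sqrt 2}(m_ij, .) in H_{sigma/sqrt 2}, with
   m_ij the midpoint of x_i and x_j, and the reproducing property turns its
   squared norm into the Gram form sum c_ij c_kl k_{sigma/sqrt 2}(m_kl, m_ij).
   By the parallelogram law each Gram term K_ij K_kl k(m_kl, m_ij) equals the
   four-cycle K_ik K_kj K_jl K_li, which is exactly the trace expansion. *)
From HB Require Import structures.
From mathcomp Require Import all_boot all_order all_algebra.
From mathcomp Require Import reals.
From mathcomp.analysis Require Import sequences exp.
From mathcomp Require Import ring.
From mathcomp Require Import boolp.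
Set Implicit Arguments. Unset Strict Implicit. Unset Printing Implicit Defensive.
Import Order.TTheory GRing.Theory Num.Theory.
Local Open Scope ring_scope.

Section KernelExpansion.
Variables (R : realType) (X : Type) (k : X -> X -> R)
  (H : (X -> R) -> Prop) (ip : (X -> R) -> (X -> R) -> R).
Hypothesis HR : is_RKHS k H ip.

Lemma rkhs_ip0l h : H h -> ip (fun _ => 0) h = 0.
Proof.
move=> Hh; have := rkhs_lin HR 1 (rkhs_zero HR) (rkhs_zero HR) Hh.
have -> : (fun _ : X => 1 * 0 + 0) = (fun _ => 0 : R).
  by apply: funext => z; rewrite mulr0 addr0.
by rewrite mul1r => /esym/eqP; rewrite -subr_eq0 addrK => /eqP.
Qed.

Lemma rkhs_span_mem (I : Type) (r : seq I) (c : I -> R) (y : I -> X) :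
  H (fun z => \sum_(i <- r) c i * k (y i) z).
Proof.
elim: r => [|i r IHr].
  under eq_fun do rewrite big_nil; exact: rkhs_zero HR.
under eq_fun do rewrite big_cons.
exact: rkhs_add HR _ _ (rkhs_scale HR _ (rkhs_section HR _)) IHr.
Qed.

Lemma rkhs_ip_span (I : Type) (r : seq I) (c : I -> R) (y : I -> X) h : H h ->
  ip (fun z => \sum_(i <- r) c i * k (y i) z) h = \sum_(i <- r) c i * h (y i).
Proof.
move=> Hh; elim: r => [|i r IHr].
  by under eq_fun do rewrite big_nil; rewrite big_nil rkhs_ip0l.
under eq_fun do rewrite big_cons.
have [Hki Hr] := (rkhs_section HR (y i), @rkhs_span_mem _ r c y).
by rewrite big_cons (rkhs_lin HR) // IHr (rkhs_sym HR) ?(rkhs_reproducing HR).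
Qed.

Lemma rkhs_norm_span (I : Type) (r : seq I) (c : I -> R) (y : I -> X) :
  ip (fun z => \sum_(i <- r) c i * k (y i) z) (fun z => \sum_(i <- r) c i * k (y i) z)
  = \sum_(i <- r) \sum_(j <- r) c i * c j * k (y j) (y i).
Proof.
rewrite rkhs_ip_span; last exact: rkhs_span_mem.
by apply: eq_bigr => i _; rewrite mulr_sumr; apply: eq_bigr => j _; rewrite mulrA.
Qed.

End KernelExpansion.

Definition midpoint (R : fieldType) (d : nat) (u v : 'rV[R]_d) : 'rV[R]_d :=
  2^-1 *: (u + v).

Section GaussianIdentities.
Variables (R : realType) (d : nat) (s : R).
Hypothesis s_neq0 : s != 0.

Lemma gauss_sqrt2M (u v : 'rV[R]_d) :
  gauss (Num.sqrt 2 * s) u v = expR (- sqdist u v / (4 * s ^+ 2)).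
Proof. by rewrite /gauss exprMn sqr_sqrtr ?ler0n // mulrA -natrM. Qed.

Lemma gauss_div_sqrt2 (u v : 'rV[R]_d) :
  gauss (s / Num.sqrt 2) u v = expR (- sqdist u v / s ^+ 2).
Proof.
have sqrt2_neq0 : Num.sqrt 2 != 0 :> R by rewrite gt_eqF // sqrtr_gt0 ltr0n.
by rewrite /gauss expr_div_n sqr_sqrtr ?ler0n // mulrCA divff ?mulr1 ?pnatr_eq0.
Qed.

Lemma gauss_mul_midpoint (u v z : 'rV[R]_d) :
  gauss s u z * gauss s v z =
  gauss (Num.sqrt 2 * s) u v * gauss (s / Num.sqrt 2) (midpoint u v) z.
Proof.
rewrite gauss_sqrt2M gauss_div_sqrt2 /gauss -!expRD; congr expR.
rewrite /sqdist !mulNr !mulr_suml -!sumrN -!big_split /=.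
by apply: eq_bigr => j _; rewrite !mxE; field.
Qed.

(* The parallelogram law in each coordinate. *)
Lemma gauss_midpoint_cycle (u v w y : 'rV[R]_d) :
  gauss (Num.sqrt 2 * s) u v * gauss (Num.sqrt 2 * s) w y *
    gauss (s / Num.sqrt 2) (midpoint w y) (midpoint u v) =
  gauss (Num.sqrt 2 * s) u w * gauss (Num.sqrt 2 * s) w v *
    gauss (Num.sqrt 2 * s) v y * gauss (Num.sqrt 2 * s) y u.
Proof.
rewrite !gauss_sqrt2M gauss_div_sqrt2 -!expRD; congr expR.
rewrite /sqdist !mulNr !mulr_suml -!sumrN -!big_split /=.
by apply: eq_bigr => j _; rewrite !mxE; field.
Qed.

End GaussianIdentities.

Lemma mxtrace_diag_mul_sqr (R : comPzRingType) (n : nat) (a b : 'rV[R]_n)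
    (K : 'M[R]_n) :
  \tr ((diag_mx a *m K) *m (diag_mx a *m K) *m
       ((diag_mx b *m K) *m (diag_mx b *m K))) =
  \sum_i \sum_j \sum_k \sum_l
    a 0 i * b 0 j * a 0 k * b 0 l * (K i k * K k j * K j l * K l i).
Proof.
apply: eq_bigr => i _; rewrite mxE; apply: eq_bigr => j _.
rewrite !mul_diag_mx !mxE mulr_suml; apply: eq_bigr => k _.
rewrite mulr_sumr; apply: eq_bigr => l _; rewrite !mxE; ring.
Qed.

Theorem corollary4 (R : realType) (d n : nat) (sigma : R) (hsigma : 0 < sigma)
    (x : 'I_n -> 'rV[R]_d) (a b : 'I_n -> R)
    (H : ('rV[R]_d -> R) -> Prop) (ip : ('rV[R]_d -> R) -> ('rV[R]_d -> R) -> R) :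
  is_RKHS (@gauss R d (sigma / Num.sqrt 2)) H ip ->
  let f := fun z => \sum_(i < n) a i * gauss sigma (x i) z in
  let g := fun z => \sum_(i < n) b i * gauss sigma (x i) z in
  let fg := fun z => f z * g z in
  let K := \matrix_(i < n, j < n) gauss (Num.sqrt 2 * sigma) (x i) (x j) in
  let Da := diag_mx (\row_(i < n) a i) in
  let Db := diag_mx (\row_(i < n) b i) in
  H fg /\
  ip fg fg = \tr ((Da *m K) *m (Da *m K) *m ((Db *m K) *m (Db *m K))).
Proof.
move=> HR f g fg K Da Db.
have sigma_neq0 : sigma != 0 by rewrite gt_eqF.
pose c (p : 'I_n * 'I_n) := a p.1 * b p.2 * K p.1 p.2.
pose m (p : 'I_n * 'I_n) := midpoint (x p.1) (x p.2).
have -> : fg = fun z => \sum_p c p * gauss (sigma / Num.sqrt 2) (m p) z.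
  apply: funext => z; rewrite /fg /f /g mulr_suml.
  under eq_bigr do rewrite mulr_sumr.
  rewrite pair_bigA; apply: eq_bigr => -[i j] _ /=.
  by rewrite mulrACA gauss_mul_midpoint // /c mxE mulrA.
split; first exact: (rkhs_span_mem HR (index_enum _) c m).
rewrite (rkhs_norm_span HR) mxtrace_diag_mul_sqr [RHS]pair_bigA.
apply: eq_bigr => -[i j] _; rewrite pair_bigA; apply: eq_bigr => -[k l] _ /=.
rewrite /c /m !mxE /= -gauss_midpoint_cycle //; ring.
Qed.
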